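(* Fix $\lambda\ge0$, $n,m\ge1$, $N=n+m$, points $Z_1,\dots,Z_N\in\mathcal Z=\mathcal X\times\mathcal W$ and responses $Y_1,\dots,Y_n$. In the setting and notation described in the context (Hilbert space $\bar{\mathcal K}$ with inner product $\langle\cdot,\cdot\rangle_\star$, embedded dictionaries $\mathcal D_f^\star,\mathcal D_g^\star$, and the iterates of Algorithm 1), for every $k\ge1$, $$A_k:=\sup_{a\in\mathcal D_f^\star}\langle r_k,a\rangle_\star\le R_\lambda\alpha_k,\qquad B_k:=\sup_{b\in\mathcal D_g^\star}\langle r_k,b\rangle_\star\le R_\lambda\alpha_k+R_\lambda\beta_k,$$ where $R_\lambda=\max\{1,\sqrt\lambda\}$.
   Context: Let $\hat P^{(1)}=\frac1N\sum_{i=1}^n\delta_{Z_i}$, $\hat P^{(2)}=\frac1N\sum_{j=n+1}^N\delta_{Z_j}$, $\hat P^{(3)}=\lambda\hat P^{(1)}$, and $\hat P_N^Z=\hat P^{(1)}+\hat P^{(2)}$. For pairs $u=(u_1,u_2)$, $v=(v_1,v_2)$ of real functions on $\{Z_1,\dots,Z_N\}$ define $\langle u,v\rangle_\star=\langle u_1,v_1\rangle_{L^2(\hat P^{(1)})}+\langle u_1-u_2,v_1-v_2\rangle_{L^2(\hat P^{(2)})}+\langle u_2,v_2\rangle_{L^2(\hat P^{(3)})}$; this is positive semidefinite, and $\bar{\mathcal K}$ is the quotient by its null space (all projections, norms $\|\cdot\|_\star$, orthogonality below are in $\bar{\mathcal K}$). Let $Y$ be any extension of the labels to all $N$ points and $T=(Y,Y)$.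 Let $\mathcal D_f$ be a finite dictionary of functions of $x$ (viewed on $\mathcal Z$) and $\mathcal D_g$ a finite dictionary of functions on $\mathcal Z$, all with $\|\cdot\|_{L^2(\hat P_N^Z)}\le1$; set $\mathcal D_f^\star=\{(\psi,0):\psi\in\mathcal D_f\}$, $\mathcal D_g^\star=\{(0,\phi):\phi\in\mathcal D_g\}$, and assume $\mathcal D_f^\star\cup\mathcal D_g^\star$ is closed under negation. Algorithm 1: set $(f_0,g_0)=(0,0)$, $S_0^f=S_0^g=\{0\}$; for $k=1,2,\dots$: $r_k=T-(f_{k-1},g_{k-1})$; choose $\psi_k^\star=(\psi_k,0)\in\arg\max\{\langle r_k,\Pi^\perp_{S_{k-1}^f}a\rangle_\star/\|\Pi^\perp_{S_{k-1}^f}a\|_\star: a\in\mathcal D_f^\star,\ \|\Pi^\perp_{S_{k-1}^f}a\|_\star>0\}$; set $S_k^f=\mathrm{span}(\psi_1^\star,\dots,\psi_k^\star)$, $(f_k,g_{k-1})=(f_{k-1},g_{k-1})+\Pi_{S_k^f}r_k$, $r_k^{(g)}=r_k-\Pi_{S_k^f}r_k$; choose $\phi_k^\star=(0,\phi_k)\in\arg\max\{\langle r_k^{(g)},\Pi^\perp_{S_{k-1}^g}b\rangle_\star/\|\Pi^\perp_{S_{k-1}^g}b\|_\star: b\in\mathcal D_g^\star,\ \|\Pi^\perp_{S_{k-1}^g}b\|_\star>0\}$; set $S_k^g=\mathrm{span}(\phi_1^\star,\dots,\phi_k^\star)$ and $(f_k,g_k)=(f_k,g_{k-1})+\Pi_{S_k^g}r_k^{(g)}$.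 Here $\Pi_S$, $\Pi_S^\perp$ are orthogonal projections onto $S$ and its orthogonal complement. Define $\alpha_k=\|\Pi_{S_k^f}r_k\|_\star$ and $\beta_k=\|\Pi_{S_k^g}r_k^{(g)}\|_\star$. *)

From HB Require Import structures.
From mathcomp Require Import all_boot all_order all_algebra.
Set Implicit Arguments. Unset Strict Implicit. Unset Printing Implicit Defensive.
Import Order.TTheory GRing.Theory Num.Theory.
Local Open Scope ring_scope.

Section Setting.
Variables (R : rcfType) (lam : R) (n m : nat).
(* N = n + m sample points, indexed by 'I_(n+m); point t is in the first
   (labelled) sample iff t < n. *)
Local Notation N := (n + m)%N.

(* Real functions on {Z_1,...,Z_N} and pairs of them. *)
Definition fn := {ffun 'I_N -> R}.
Definition pairV := (fn * fn)%type.

(* <u,v>_star = <u1,v1>_{L2(P1)} + <u1-u2,v1-v2>_{L2(P2)} + <u2,v2>_{L2(P3)},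
   with P1 = (1/N) sum_{t<n} delta, P2 = (1/N) sum_{t>=n} delta, P3 = lam P1. *)
Definition ipS (u v : pairV) : R :=
  (N%:R)^-1 * \sum_(t < N)
     (if (t < n)%N then u.1 t * v.1 t + lam * (u.2 t * v.2 t)
      else (u.1 t - u.2 t) * (v.1 t - v.2 t)).

Definition normS (u : pairV) : R := Num.sqrt (ipS u u).

Definition in_span (s : seq pairV) (v : pairV) : Prop :=
  exists c : 'I_(size s) -> R,
    forall t, v.1 t = \sum_(i < size s) c i * (s`_i).1 t /\
              v.2 t = \sum_(i < size s) c i * (s`_i).2 t.

(* p is (a representative, taken in span s, of) the orthogonal projection
   Pi_{span s} r in the quotient Hilbert space Kbar. *)
Definition is_proj (s : seq pairV) (r p : pairV) : Prop :=
  in_span s p /\ forall w, w \in s -> ipS (r - p) w = 0.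

(* the greedy selection criterion <r, Pi^perp a>_star / ||Pi^perp a||_star,
   where Pi^perp a = a - pa. *)
Definition ratioS (r a pa : pairV) : R := ipS r (a - pa) / normS (a - pa).

Definition is_argmax (I : Type) (emb : I -> pairV) (s : seq pairV)
    (r : pairV) (b : pairV) : Prop :=
  exists pb, is_proj s b pb /\ 0 < normS (b - pb) /\
    forall i pa, is_proj s (emb i) pa -> 0 < normS (emb i - pa) ->
      ratioS r (emb i) pa <= ratioS r b pb.

Variables (X W : Type) (Z : 'I_N -> (X * W)%type) (Y : 'I_N -> R).
Variables (I J : finType) (psi : I -> X -> R) (phi : J -> (X * W)%type -> R).

Definition targetT : pairV := ([ffun t => Y t], [ffun t => Y t]).
Definition embf (i : I) : pairV := ([ffun t => psi i (Z t).1], 0).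
Definition embg (j : J) : pairV := (0, [ffun t => phi j (Z t)]).

Definition sqnormN (h : fn) : R := (N%:R)^-1 * \sum_(t < N) h t ^+ 2.

Variables (psidx : nat -> I) (phidx : nat -> J) (F : nat -> pairV).

Definition Sf (k : nat) : seq pairV := [seq embf (psidx j) | j <- iota 1 k].
Definition Sg (k : nat) : seq pairV := [seq embg (phidx j) | j <- iota 1 k].

Definition resid (k : nat) : pairV := targetT - F k.-1.

(* Step k (k >= 1) of Algorithm 1; F k = (f_k, g_k). *)
Definition alg_step (k : nat) : Prop :=
  is_argmax embf (Sf k.-1) (resid k) (embf (psidx k)) /\
  exists P1 P2,
    is_proj (Sf k) (resid k) P1 /\
    is_argmax embg (Sg k.-1) (resid k - P1) (embg (phidx k)) /\
    is_proj (Sg k) (resid k - P1) P2 /\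
    F k = F k.-1 + P1 + P2.

End Setting.

(* The greedy choice of psi_k maximises <r_k, Pi^perp a> / ||Pi^perp a|| over the
   dictionary, Pi^perp being the projection orthogonal to S_(k-1)^f.  Since
   r_k - Pi_(S_k^f) r_k is orthogonal to S_k^f, which contains S_(k-1)^f and psi_k,
   splitting a = Pi a + Pi^perp a gives
     <r_k, a> <= <Pi_(S_k^f) r_k, Pi a + (||Pi^perp a|| / ||Pi^perp psi_k||) Pi^perp psi_k>,
   and by Pythagoras the vector on the right has norm ||a||, so Cauchy-Schwarz yields
   <r_k, a> <= alpha_k ||a||.  For B_k, split r_k = Pi_(S_k^f) r_k + r_k^(g): the first
   part is handled by Cauchy-Schwarz, the second by the same greedy argument in the
   g-dictionary.  Dictionary elements have star-norm at most 1 on the f-side and at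
   most R_lambda on the g-side. *)

From HB Require Import structures.
From mathcomp Require Import all_boot all_order all_algebra.
From mathcomp Require Import ring lra.
Set Implicit Arguments. Unset Strict Implicit. Unset Printing Implicit Defensive.
Import Order.TTheory GRing.Theory Num.Theory.
Local Open Scope ring_scope.

Section Combination.
Variables (R : pzRingType) (V : lmodType R).

Definition combination (s : seq V) (p : V) : Prop :=
  exists c : 'I_(size s) -> R, p = \sum_(i < size s) c i *: s`_i.

Lemma combination_nil : combination [::] 0.
Proof. by exists (fun=> 0); rewrite big_ord0. Qed.

Lemma combination_cons (w : V) s p q a :
  combination s p -> combination s q -> combination (w :: s) (p + a *: (w - q)).
Proof.
move=> [c ->] [d ->].
exists (fun i => if unlift ord0 i is Some j then c j - a * d j else a).
rewrite /= big_ord_recl unlift_none /=.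
under [X in _ = _ + X]eq_bigr => i _ do rewrite liftK add0n scalerBl -scalerA.
by rewrite sumrB -scaler_sumr scalerBr addrCA.
Qed.

End Combination.

Section PSDForm.
Variables (R : rcfType) (V : lmodType R) (form : V -> V -> R).
Hypotheses (formC : forall u v, form u v = form v u)
  (formDl : forall u v w, form (u + v) w = form u w + form v w)
  (formZl : forall a u w, form (a *: u) w = a * form u w)
  (form_ge0 : forall u, 0 <= form u u).

Definition fnorm (u : V) : R := Num.sqrt (form u u).

Definition orthogonal_proj (s : seq V) (r p : V) : Prop :=
  combination s p /\ forall w, w \in s -> form (r - p) w = 0.

Lemma form0l w : form 0 w = 0.
Proof. by rewrite -(scale0r 0) formZl mul0r. Qed.

Lemma formNl u w : form (- u) w = - form u w.
Proof. by rewrite -scaleN1r formZl mulN1r. Qed.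

Lemma formBl u v w : form (u - v) w = form u w - form v w.
Proof. by rewrite formDl formNl. Qed.

Lemma formDr u v w : form w (u + v) = form w u + form w v.
Proof. by rewrite formC formDl !(formC w). Qed.

Lemma formZr a u w : form w (a *: u) = a * form w u.
Proof. by rewrite formC formZl formC. Qed.

Lemma formBr u v w : form w (u - v) = form w u - form w v.
Proof. by rewrite !(formC w) formBl. Qed.

Lemma form_sumr k (c : 'I_k -> R) (s : 'I_k -> V) w :
  form w (\sum_(i < k) c i *: s i) = \sum_(i < k) c i * form w (s i).
Proof.
rewrite formC (big_morph (form^~ w) (fun u v => formDl u v w) (form0l w)).
by apply: eq_bigr => i _; rewrite formZl formC.
Qed.

Lemma form_expand u v x :
  form (u + x *: v) (u + x *: v) = form u u + 2 * x * form u v + x ^+ 2 * form v v.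
Proof. rewrite !formDl !formDr !formZl !formZr [form v u]formC; ring. Qed.

Lemma form_self_eq0 u v : form v v = 0 -> form u v = 0.
Proof.
move=> vv0; apply/eqP/negPn/negP => uv_neq0.
have := form_ge0 (u + (- (form u u + 1) / (2 * form u v)) *: v).
rewrite form_expand vv0 mulr0 addr0.
have -> : 2 * (- (form u u + 1) / (2 * form u v)) * form u v = - (form u u + 1) by field.
lra.
Qed.

Lemma fnorm_ge0 u : 0 <= fnorm u.
Proof. exact: sqrtr_ge0. Qed.

Lemma fnorm_sqr u : fnorm u ^+ 2 = form u u.
Proof. by rewrite sqr_sqrtr. Qed.

Lemma form_CauchySchwarz u v : form u v <= fnorm u * fnorm v.
Proof.
have [vv0 | vv_neq0] := eqVneq (form v v) 0.
  by rewrite form_self_eq0 // mulr_ge0 ?fnorm_ge0.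
have vv_gt0 : 0 < form v v by rewrite lt_def vv_neq0 form_ge0.
have sqr_le : form u v ^+ 2 <= form u u * form v v.
  have := form_ge0 (u + (- (form u v / form v v)) *: v); rewrite form_expand.
  have -> : form u u + 2 * - (form u v / form v v) * form u v
      + (- (form u v / form v v)) ^+ 2 * form v v
    = form u u - form u v ^+ 2 / form v v by field.
  by rewrite subr_ge0 ler_pdivrMr.
apply: (le_trans (ler_norm _)); rewrite -sqrtr_sqr /fnorm -sqrtrM //.
by rewrite ler_sqrt // mulr_ge0.
Qed.

Lemma form_pythagoras u v : form u v = 0 -> form (u + v) (u + v) = form u u + form v v.
Proof. by move=> uv0; rewrite !formDl !formDr [form v u]formC uv0 addr0 add0r. Qed.

Lemma combination_orthogonal s r p :
  combination s p -> (forall w, w \in s -> form r w = 0) -> form r p = 0.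
Proof.
move=> [c ->] r_orth; rewrite form_sumr big1 // => i _.
by rewrite r_orth ?mulr0 // mem_nth.
Qed.

Lemma orthogonal_proj_exists s v : exists p, orthogonal_proj s v p.
Proof.
elim: s v => [|w s IH] v; first by exists 0; split=> //; exact: combination_nil.
have [q [q_comb q_orth]] := IH w; have [p [p_comb p_orth]] := IH v.
have e_comb a : combination (w :: s) (p + a *: (w - q)) by exact: combination_cons.
have wE : w = (w - q) + q by rewrite subrK.
move: (w - q) wE q_orth e_comb => e wE e_orth e_comb.
have eq0 : form e q = 0 := combination_orthogonal q_comb e_orth.
have vq0 : form (v - p) q = 0 := combination_orthogonal q_comb p_orth.
pose a := if form e e == 0 then 0 else form (v - p) e / form e e.
have ve : form (v - p) e = a * form e e.
  rewrite /a; case: eqP => [ee0 | /eqP ee_neq0]; last by field.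
  by rewrite mul0r form_self_eq0.
exists (p + a *: e); split; first exact: e_comb.
have -> : v - (p + a *: e) = (v - p) - a *: e by rewrite opprD addrA.
move=> x; rewrite inE => /orP [/eqP -> | xs].
  by rewrite wE formBl formZl !formDr eq0 vq0 !addr0 ve subrr.
by rewrite formBl formZl p_orth // e_orth // mulr0 subr0.
Qed.

Lemma orthogonal_proj_residual s r P P' x :
  orthogonal_proj s r P -> orthogonal_proj s r P' -> form (r - P') x = form (r - P) x.
Proof.
move=> [P_comb P_orth] [P'_comb P'_orth].
have dE : (r - P') - (r - P) = P - P' by rewrite opprB addrC addrA subrK.
have d_orth w : w \in s -> form (P - P') w = 0.
  by move=> ws; rewrite -dE formBl P_orth // P'_orth // subrr.
have dd0 : form (P - P') (P - P') = 0.
  by rewrite formBr !(combination_orthogonal _ d_orth) // subrr.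
by apply/eqP; rewrite -subr_eq0 -formBl dE formC form_self_eq0.
Qed.

Lemma orthogonal_proj_orthogonal s a pa x :
  orthogonal_proj s a pa -> combination s x -> form x (a - pa) = 0.
Proof. by move=> [_ a_orth] x_comb; rewrite formC (combination_orthogonal x_comb). Qed.

Lemma fnorm_proj_rescale s a pa u :
  orthogonal_proj s a pa -> (forall w, w \in s -> form u w = 0) -> 0 < fnorm u ->
  fnorm (pa + (fnorm (a - pa) / fnorm u) *: u) = fnorm a.
Proof.
move=> a_proj u_orth u_gt0; have [pa_comb _] := a_proj.
have pa_u : form pa ((fnorm (a - pa) / fnorm u) *: u) = 0.
  by rewrite formZr formC (combination_orthogonal pa_comb u_orth) mulr0.
have aE : form a a = form pa pa + form (a - pa) (a - pa).
  rewrite -form_pythagoras ?(orthogonal_proj_orthogonal a_proj) //.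
  by rewrite [pa + _]addrC subrK.
apply: (congr1 Num.sqrt); rewrite form_pythagoras // formZl formZr aE -!fnorm_sqr.
by congr (_ + _); field; rewrite gt_eqF.
Qed.

Lemma greedy_form_bound s s2 r P a pa b pb :
  orthogonal_proj s2 r P -> {subset s <= s2} -> b \in s2 ->
  orthogonal_proj s b pb -> 0 < fnorm (b - pb) -> orthogonal_proj s a pa ->
  (0 < fnorm (a - pa) ->
     form r (a - pa) / fnorm (a - pa) <= form r (b - pb) / fnorm (b - pb)) ->
  form r a <= fnorm P * fnorm a.
Proof.
move=> [_ P_orth] s_s2 b_s2 b_proj u_gt0 a_proj greedy.
have [[pb_comb pb_orth] [pa_comb _]] := (b_proj, a_proj).
set u := b - pb in u_gt0 pb_orth greedy *; set t := fnorm (a - pa) in greedy *.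
have rP x : combination s x -> form r x = form P x.
  move=> x_comb; apply/eqP; rewrite -subr_eq0 -formBl.
  by rewrite (combination_orthogonal x_comb) // => w /s_s2 /P_orth.
have rPu : form r u = form P u.
  rewrite /u !formBr (rP pb) //; congr (_ - _).
  by apply/eqP; rewrite -subr_eq0 -formBl P_orth.
have ra_pa : form r (a - pa) <= t * (form P u / fnorm u).
  have [t_gt0 | t_le0] := ltP 0 t.
    by rewrite -rPu mulrC -ler_pdivrMr // greedy.
  have t0 : t = 0 by apply/eqP; rewrite eq_le t_le0 fnorm_ge0.
  by rewrite form_self_eq0 ?t0 ?mul0r // -fnorm_sqr -/t t0 expr0n.
rewrite -[a in form r a](subrK pa) formDr addrC rP //.
apply: (le_trans (lerD (lexx _) ra_pa)).
have -> : t * (form P u / fnorm u) = form P ((t / fnorm u) *: u) by rewrite formZr; ring.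
rewrite -formDr -(fnorm_proj_rescale a_proj pb_orth u_gt0).
exact: form_CauchySchwarz.
Qed.

End PSDForm.

HB.instance Definition _ (R : rcfType) (n m : nat) :=
  GRing.Lmodule.copy (pairV R n m) ({ffun 'I_(n + m) -> R^o} * {ffun 'I_(n + m) -> R^o})%type.

Lemma map_iota1_rcons (T : Type) (f : nat -> T) k : (0 < k)%N ->
  [seq f j | j <- iota 1 k] = rcons [seq f j | j <- iota 1 k.-1] (f k).
Proof.
by case: k => // k _; rewrite -map_rcons -cats1 -[X in iota _ X]addn1 iotaD add1n.
Qed.

Section PairForm.
Variables (R : rcfType) (lam : R) (n m : nat).
Hypothesis lam_ge0 : 0 <= lam.
Local Notation V := (pairV R n m).
Local Notation ip := (@ipS R lam n m).
Local Notation RL := (Num.max 1 (Num.sqrt lam)).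

Lemma scale_fstE a (u : V) t : (a *: u).1 t = a * u.1 t.
Proof. by rewrite ffunE. Qed.

Lemma scale_sndE a (u : V) t : (a *: u).2 t = a * u.2 t.
Proof. by rewrite ffunE. Qed.

Lemma ipSC (u v : V) : ipS lam u v = ipS lam v u.
Proof. by rewrite /ipS; congr (_ * _); apply: eq_bigr => t _; case: ifP => _; ring. Qed.

Lemma ipSDl (u v w : V) : ipS lam (u + v) w = ipS lam u w + ipS lam v w.
Proof.
rewrite /ipS -mulrDr -big_split; congr (_ * _); apply: eq_bigr => t _ /=.
by rewrite !ffunE; case: ifP => _; ring.
Qed.

Lemma ipSZl a (u w : V) : ipS lam (a *: u) w = a * ipS lam u w.
Proof.
rewrite /ipS [RHS]mulrCA [X in _ = _ * X]mulr_sumr; congr (_ * _); apply: eq_bigr => t _.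
by rewrite scale_fstE scale_sndE; case: ifP => _; ring.
Qed.

Lemma ipS_ge0 (u : V) : 0 <= ipS lam u u.
Proof.
rewrite /ipS mulr_ge0 ?invr_ge0 // sumr_ge0 // => t _.
case: ifP => _; rewrite -!expr2 ?sqr_ge0 //.
by rewrite addr_ge0 ?sqr_ge0 // mulr_ge0 ?sqr_ge0.
Qed.

Lemma combination_fstE k (c : 'I_k -> R) (s : 'I_k -> V) t :
  (\sum_(i < k) c i *: s i).1 t = \sum_(i < k) c i * (s i).1 t.
Proof. by rewrite raddf_sum sum_ffunE; apply: eq_bigr => i _; rewrite scale_fstE. Qed.

Lemma combination_sndE k (c : 'I_k -> R) (s : 'I_k -> V) t :
  (\sum_(i < k) c i *: s i).2 t = \sum_(i < k) c i * (s i).2 t.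
Proof. by rewrite raddf_sum sum_ffunE; apply: eq_bigr => i _; rewrite scale_sndE. Qed.

Lemma in_spanP (s : seq V) p : in_span s p <-> combination s p.
Proof.
split=> [[c pE] | [c ->]]; exists c; last by move=> t; rewrite combination_fstE combination_sndE.
case: p pE => p1 p2 pE; rewrite [RHS]surjective_pairing.
by congr pair; apply/ffunP => t; rewrite ?combination_fstE ?combination_sndE; case: (pE t).
Qed.

Lemma is_projP (s : seq V) r p : is_proj lam s r p <-> orthogonal_proj ip s r p.
Proof. by split=> -[/in_spanP p_comb p_orth]. Qed.

Lemma normS_ge0 (u : V) : 0 <= normS lam u.
Proof. exact: sqrtr_ge0. Qed.

Lemma normS_CauchySchwarz (u v : V) : ipS lam u v <= normS lam u * normS lam v.
Proof. exact: (form_CauchySchwarz ipSC ipSDl ipSZl ipS_ge0). Qed.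

(* Projections in the quotient space are only defined up to the null space of [ipS]. *)
Lemma is_proj_residual s (r P P' x : V) :
  is_proj lam s r P -> is_proj lam s r P' -> ipS lam (r - P') x = ipS lam (r - P) x.
Proof.
move=> /is_projP P_proj /is_projP P'_proj.
exact: (orthogonal_proj_residual ipSC ipSDl ipSZl ipS_ge0 x P_proj P'_proj).
Qed.

Lemma ipS_fst (h : fn R n m) : ipS lam (h, 0) (h, 0) = sqnormN h.
Proof.
rewrite /ipS /sqnormN; congr (_ * _); apply: eq_bigr => t _ /=.
by rewrite ffunE; case: ifP => _; ring.
Qed.

Lemma normS_fst_le1 (h : fn R n m) : sqnormN h <= 1 -> normS lam (h, 0) <= 1.
Proof. by move=> h_le1; rewrite /normS ipS_fst -sqrtr1 ler_sqrt. Qed.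

Lemma ipS_snd_le (h : fn R n m) : ipS lam (0, h) (0, h) <= RL ^+ 2 * sqnormN h.
Proof.
have RL_ge0 : 0 <= RL by rewrite le_max ler01.
have lam_le : lam <= RL ^+ 2.
  by rewrite -{1}[lam]sqr_sqrtr // ler_sqr ?nnegrE ?sqrtr_ge0 // le_max lexx orbT.
have one_le : 1 <= RL ^+ 2 by rewrite -{1}(expr1n R 2) ler_sqr ?nnegrE // le_max lexx.
rewrite /ipS /sqnormN mulrCA ler_wpM2l ?invr_ge0 // mulr_sumr ler_sum // => t _ /=.
rewrite ffunE; case: ifP => _; rewrite ?mul0r ?add0r ?sub0r ?mulrNN -expr2.
  by rewrite ler_wpM2r ?sqr_ge0.
by rewrite ler_peMl ?sqr_ge0.
Qed.

Lemma normS_snd_le (h : fn R n m) : sqnormN h <= 1 -> normS lam (0, h) <= RL.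
Proof.
move=> h_le1; have RL_ge0 : 0 <= RL by rewrite le_max ler01.
rewrite /normS -(ger0_norm RL_ge0) -sqrtr_sqr ler_sqrt ?sqr_ge0 //.
by rewrite (le_trans (ipS_snd_le h)) // ler_piMr ?sqr_ge0.
Qed.

Lemma is_argmax_bound (I : Type) (emb : I -> V) s r r0 P b :
  (forall x, ipS lam r0 x = ipS lam r x) ->
  is_proj lam (rcons s b) r P -> is_argmax lam emb s r0 b ->
  forall i, ipS lam r (emb i) <= normS lam P * normS lam (emb i).
Proof.
move=> r0E /is_projP P_proj [pb [/is_projP b_proj [u_gt0 greedy]]] i.
have [pa a_proj] := orthogonal_proj_exists ipSC ipSDl ipSZl ipS_ge0 s (emb i).
apply: (greedy_form_bound ipSC ipSDl ipSZl ipS_ge0 P_proj _ _ b_proj u_gt0 a_proj).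
- by move=> x; rewrite mem_rcons inE orbC => ->.
- by rewrite mem_rcons mem_head.
- move=> a_gt0; have := greedy i pa (proj2 (is_projP _ _ _) a_proj) a_gt0.
  by rewrite /ratioS !r0E.
Qed.

End PairForm.

Theorem lemmaC4 (R : rcfType) (lam : R) (n m : nat)
  (X W : Type) (Z : 'I_(n + m) -> (X * W)%type) (Y : 'I_(n + m) -> R)
  (I J : finType) (psi : I -> X -> R) (phi : J -> (X * W)%type -> R)
  (psidx : nat -> I) (phidx : nat -> J) (F : nat -> pairV R n m) (K : nat) :
  0 <= lam -> (1 <= n)%N -> (1 <= m)%N ->
  (forall i, sqnormN [ffun t => psi i (Z t).1] <= 1) ->
  (forall j, sqnormN [ffun t => phi j (Z t)] <= 1) ->
  (* D_f^star \cup D_g^star closed under negation *)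
  (forall i, (exists i', embf Z psi i' = - embf Z psi i) \/
             (exists j, embg Z phi j = - embf Z psi i)) ->
  (forall j, (exists i, embf Z psi i = - embg Z phi j) \/
             (exists j', embg Z phi j' = - embg Z phi j)) ->
  F 0%N = 0 ->
  (forall k, (1 <= k <= K)%N -> alg_step lam Z Y psi phi psidx phidx F k) ->
  (1 <= K)%N ->
  let RL := Num.max 1 (Num.sqrt lam) in
  let rK := resid Y F K in
  forall P1 P2,
    is_proj lam (Sf Z psi psidx K) rK P1 ->
    is_proj lam (Sg Z phi phidx K) (rK - P1) P2 ->
    (forall i, ipS lam (rK) (embf Z psi i) <= RL * normS lam P1) /\
    (forall j, ipS lam (rK) (embg Z phi j) <= RL * normS lam P1 + RL * normS lam P2).
Proof.
move=> lam_ge0 _ _ psi_le1 phi_le1 _ _ _ steps K_ge1 RL rK P1 P2 P1_proj P2_proj.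
have /steps [f_argmax [P1' [P2' [P1'_proj [g_argmax _]]]]] : (1 <= K <= K)%N.
  by rewrite K_ge1 leqnn.
have RL_ge1 : 1 <= RL by rewrite le_max lexx.
rewrite [Sf _ _ _ _]map_iota1_rcons // in P1_proj P1'_proj.
rewrite [Sg _ _ _ _]map_iota1_rcons // in P2_proj.
split=> [i | j].
  apply: le_trans (is_argmax_bound lam_ge0 (fun=> erefl) P1_proj f_argmax i) _.
  by rewrite mulrC ler_wpM2r ?normS_ge0 // (le_trans (normS_fst_le1 lam (psi_le1 i))).
have r0E x := is_proj_residual lam_ge0 x P1_proj P1'_proj.
rewrite -[rK in ipS lam rK](subrK P1) ipSDl addrC !(mulrC RL).
apply: lerD; [apply: le_trans (normS_CauchySchwarz lam_ge0 _ _) _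
             | apply: le_trans (is_argmax_bound lam_ge0 r0E P2_proj g_argmax j) _];
  by rewrite ler_wpM2l ?normS_ge0 // normS_snd_le.
Qed.
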